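(* Let $k,N\in\mathbb{N}$ and let $a_1,a_2,\dots$ be complex numbers; set $a_0:=1$. Define $a_{n,j}:=a_j$ if $n\le N$ and $a_{n,j}:=0$ otherwise ($n,j\ge 1$). Then $$\hat{B}_{k+N,N}(a_0,a_1,\dots,a_k)=\sum_{L\vdash k}\frac{1}{C_{stb}(L)}\sum_{\sigma\in S_{\ell(L)}}\operatorname{sign}(\sigma)\,\mathbb{A}_{\sigma,L}\big(\{a_{n,j}\}_{n,j\ge1}\big).$$
   Context: The ordinary Bell polynomial is $\hat{B}_{n,k}(x_1,\dots,x_{n-k+1}):=\sum\frac{k!}{j_1!\cdots j_{n-k+1}!}x_1^{j_1}\cdots x_{n-k+1}^{j_{n-k+1}}$, summed over integers $j_i\ge0$ with $\sum_i j_i=k$ and $\sum_i i\,j_i=n$; equivalently $\big(\sum_{j\ge1}x_jt^j\big)^k=\sum_{n\ge k}\hat{B}_{n,k}(x_1,\dots,x_{n-k+1})t^n$ (here the arguments are $x_1=a_0,x_2=a_1,\dots$). $L\vdash k$ means $L=[x_1,\dots,x_m]$ is a partition of $k$ (multiset of positive integers summing to $k$), $\ell(L)=m$, and $C_{stb}(L):=\prod_x(\#\{i:x_i=x\})!$ over distinct values $x$ in $L$. Writing $L=[k_1,\dots,k_m]$ with $k_1\le\cdots\le k_m$ and, for $\sigma\in S_m$, decomposing $\sigma$ into disjoint cycles $C_1,\dots,C_r$ (fixed points kept as length-one cycles), $\mathbb{A}_{\sigma,L}(\{a_{n,j}\}):=\prod_{t=1}^{r}\big(\sum_{n=1}^{\infty}\prod_{i\in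 C_t}a_{n,k_i}\big)$ (finite sums here). *)

From mathcomp Require Import all_boot all_order all_algebra all_fingroup.
From mathcomp Require Import Rstruct complex.
Set Implicit Arguments. Unset Strict Implicit. Unset Printing Implicit Defensive.
Import Order.TTheory GRing.Theory Num.Theory.
Local Open Scope ring_scope.

Definition Cplx : numClosedFieldType := (Rdefinitions.R)[i].

(* Ordinary Bell polynomial \hat B_{n,k}(x_1,...,x_{n-k+1}); the argument
   x_{i+1} is [x i] (i.e. [x] is 0-indexed).  The exponent vector
   (j_1,...,j_{n-k+1}) is [j], with j_{i+1} = j i; each j_i <= k. *)
Definition obell (R : fieldType) (n k : nat) (x : nat -> R) : R :=
  \sum_(j : {ffun 'I_(n - k + 1) -> 'I_k.+1} |
          ((\sum_(i < n - k + 1) (j i : nat))%N == k) && ((\sum_(i < n - k + 1) (i.+1 * j i))%N == n))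
     (k`!)%:R / (\prod_(i < n - k + 1) (j i)`!)%N%:R * \prod_(i < n - k + 1) x i ^+ j i.

Definition is_partition (k : nat) (L : seq nat) : bool :=
  [&& sorted leq L, all (fun x => 0 < x)%N L & sumn L == k].

Definition Cstb (L : seq nat) : nat :=
  (\prod_(x <- undup L) (count_mem x L)`!)%N.

(* A_{sigma,L}({a_{n,j}}) = prod over cycles C of sigma (fixed points
   included, porbits) of sum_{n>=1} prod_{i in C} a_{n, k_i},
   where the sum over n is truncated to 1 <= n <= M (all further terms
   vanish in our application, where a_{n,j}=0 for n > M). *)
Definition AsigL (R : comRingType) (m : nat) (s : 'S_m) (kk : 'I_m -> nat)
    (anj : nat -> nat -> R) (M : nat) : R :=
  \prod_(C in porbits s) \sum_(1 <= n < M.+1) \prod_(i in C) anj n (kk i).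

From mathcomp Require Import all_boot all_order all_algebra all_fingroup.
From mathcomp Require Import Rstruct complex.
Set Implicit Arguments. Unset Strict Implicit. Unset Printing Implicit Defensive.
Import GRing.Theory Num.Theory.
Local Open Scope ring_scope.

(* With a_{n,j} = a_j for n <= N, every cycle of sigma contributes N times the
   product of its a's, so A_{sigma,L} = N^{cyc sigma} prod_i a_{k_i}.  Summing
   sign(sigma) N^{cyc sigma} over S_l counts pairs (sigma, g) with g : [l] -> [N]
   constant on the cycles of sigma; for non-injective g, composing with the
   transposition of two points with equal image is a sign-reversing involution,
   so the sum is the falling factorial N (N-1) ... (N-l+1).  The right-hand side
   is therefore sum_L N^_{l(L)} / C_stb(L) prod_i a_{L_i}, which is the
   multinomial expansion of \hat B_{k+N,N}(1, a_1, ..., a_k): its exponent vectors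
   are the multiplicity vectors of the partitions L of k with at most N parts,
   a_0 = 1 taking the remaining N - l(L) factors. *)

Section CycleSign.
Variable T : finType.
Implicit Types (s : {perm T}).

Lemma porbit_const (U : Type) s (g : T -> U) x y :
  (forall z, g (s z) = g z) -> y \in porbit s x -> g y = g x.
Proof.
move=> gs /porbitP [i ->]; elim: i => [|i IHi]; first by rewrite expg0 perm1.
by rewrite expgSr permM gs.
Qed.

Lemma porbit_inhabited s (C : {set T}) : C \in porbits s -> exists x, x \in C.
Proof. by case/imsetP=> x _ ->; exists x; apply: porbit_id. Qed.

Lemma card_porbit_const_ffun (R : finType) s :
  #|[set g : {ffun T -> R} | [forall x, g (s x) == g x]]| = (#|R| ^ #|porbits s|)%N.
Proof.
pose Orb := {C : {set T} | C \in porbits s}.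
have orbP x : porbit s x \in porbits s by apply: imset_f.
pose orb x : Orb := exist _ (porbit s x) (orbP x).
pose extend (f : {ffun Orb -> R}) := [ffun x => f (orb x)].
have orbS x : orb (s x) = orb x.
  by apply: val_inj; have := porbit_perm s 1 x; rewrite expg1.
have orb_onto (C : Orb) : exists x, C = orb x.
  by case: C => C /[dup] /imsetP [x _ ->] CP; exists x; apply: val_inj.
have extend_inj : injective extend.
  move=> f1 f2 /ffunP f12; apply/ffunP => C; have [x ->] := orb_onto C.
  by have := f12 x; rewrite !ffunE.
have -> : [set g : {ffun T -> R} | [forall x, g (s x) == g x]] = extend @: setT.
  apply/setP => g; rewrite inE; apply/forallP/imsetP => [gs | [f _ ->] x].
    have gsE z : g (s z) = g z by apply/eqP/gs.
    pose pick (C : Orb) := xchoose (porbit_inhabited (valP C)).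
    exists [ffun C => g (pick C)] => //; apply/ffunP => x; rewrite !ffunE.
    symmetry; apply: (porbit_const gsE).
    exact: (xchooseP (porbit_inhabited (valP (orb x)))).
  by rewrite !ffunE orbS.
by rewrite card_imset // cardsT card_ffun card_sig.
Qed.

Lemma sum_sign_stabilizer (R : numDomainType) (U : eqType) (g : T -> U) :
  \sum_(s : {perm T} | [forall x, g (s x) == g x]) (-1) ^+ odd_perm s
    = (injectiveb g)%:R :> R.
Proof.
have [/injectiveP g_inj | /injectivePn [x [y xy gxy]]] := boolP (injectiveb g).
  rewrite (big_pred1 1%g) ?odd_perm1 // => s /=.
  apply/forallP/eqP => [gs | -> z]; last by rewrite perm1.
  by apply/permP => z; rewrite perm1; apply/g_inj/eqP.
pose t := tperm x y.
have gt z : g (t z) = g z by rewrite /t; case: tpermP => [->|->|].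
set S := \sum_(s | _) _; suff : S = - S.
  by move/eqP; rewrite -subr_eq0 opprK -mulr2n mulrn_eq0 => /eqP.
rewrite {1}/S (reindex_inj (mulIg t)) /= -sumrN; apply: eq_big => s.
  by apply: eq_forallb => z; rewrite permM gt.
by move=> _; rewrite odd_permM odd_tperm xy signr_addb expr1 mulrN1.
Qed.

Lemma sum_sign_pow_porbits (R : numDomainType) n :
  \sum_(s : {perm T}) (-1) ^+ odd_perm s * n%:R ^+ #|porbits s| = (n ^_ #|T|)%:R :> R.
Proof.
transitivity (\sum_(s : {perm T}) \sum_(g : {ffun T -> 'I_n} | [forall x, g (s x) == g x])
    (-1) ^+ odd_perm s : R).
  apply: eq_bigr => s _; rewrite sumr_const -natrX -{1}(card_ord n).
  by rewrite -card_porbit_const_ffun mulr_natr; congr (_ *+ _); apply: eq_card => g; rewrite inE.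
rewrite (exchange_big_dep xpredT) //=.
under eq_bigr do rewrite sum_sign_stabilizer.
have := card_inj_ffuns T 'I_n; rewrite card_ord => <-.
rewrite -sum1_card natr_sum [RHS]big_mkcond /=.
by apply: eq_bigr => g _; rewrite inE; case: injectiveb.
Qed.

End CycleSign.

Lemma prod_porbits (R : comPzSemiRingType) (T : finType) (s : {perm T}) (F : T -> R) :
  \prod_(C in porbits s) \prod_(i in C) F i = \prod_i F i.
Proof.
rewrite [RHS](partition_big (porbit s) (mem (porbits s))) => [|i _]; last exact: imset_f.
apply: eq_bigr => _ /imsetP [x _ ->]; apply: eq_bigl => i.
by rewrite eq_porbit_mem.
Qed.

Lemma AsigL_truncated (R : comNzRingType) m (s : 'S_m) (kk : 'I_m -> nat) (a : nat -> R) N :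
  AsigL s kk (fun n j => if (n <= N)%N then a j else 0) N
    = N%:R ^+ #|porbits s| * \prod_(i < m) a (kk i).
Proof.
rewrite /AsigL -(prod_porbits s) -prodrMl; apply: eq_bigr => C _.
rewrite (eq_big_nat _ _ (F2 := fun _ => \prod_(i in C) a (kk i))).
  by rewrite sumr_const_nat subn1 mulr_natl.
by move=> n /andP [_ nN]; apply: eq_bigr => i _; rewrite -ltnS nN.
Qed.

Lemma sum_signed_AsigL_truncated (R : numDomainType) m (kk : 'I_m -> nat) (a : nat -> R) N :
  \sum_(s : 'S_m) (-1) ^+ odd_perm s * AsigL s kk (fun n j => if (n <= N)%N then a j else 0) N
    = (N ^_ m)%:R * \prod_(i < m) a (kk i).
Proof.
under eq_bigr do rewrite AsigL_truncated mulrA.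
by rewrite -mulr_suml sum_sign_pow_porbits card_ord.
Qed.

Section BoundedMultiplicities.
Variables (n : nat) (s : seq nat).
Hypothesis s_lt : all (fun x => x < n)%N s.

Lemma big_undup_ord (R : Type) (idx : R) (op : Monoid.com_law idx) (G : nat -> R) :
  (forall i, i \notin s -> G i = idx) ->
  \big[op/idx]_(x <- undup s) G x = \big[op/idx]_(i < n) G i.
Proof.
move=> G_out; rewrite -(big_mkord xpredT) [RHS](bigID (mem s)) /=.
rewrite [X in op _ X]big1 => [|i /G_out //]; rewrite Monoid.mulm1.
rewrite -[RHS]big_filter; apply: perm_big; apply: uniq_perm.
- exact: undup_uniq.
- exact/filter_uniq/iota_uniq.
move=> x; rewrite mem_undup mem_filter mem_iota /=.
by rewrite subn0; case xs: (x \in s); rewrite ?(allP s_lt x xs).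
Qed.

Lemma sum_count_ord (F : nat -> nat) :
  (\sum_(x <- s) F x = \sum_(i < n) count_mem (i : nat) s * F i)%N.
Proof.
rewrite -big_undup_iterop_count big_undup_ord => [|i /count_memPn -> //].
by apply: eq_bigr => i _; rewrite Monoid.iteropE iter_addn_0 mulnC.
Qed.

Lemma prod_count_ord (R : comPzSemiRingType) (F : nat -> R) :
  \prod_(x <- s) F x = \prod_(i < n) F i ^+ count_mem (i : nat) s.
Proof.
by rewrite -prodr_undup_exp_count big_undup_ord => // i /count_memPn ->.
Qed.

Lemma Cstb_count_ord : Cstb s = (\prod_(i < n) (count_mem (i : nat) s)`!)%N.
Proof. by rewrite /Cstb big_undup_ord => // i /count_memPn ->. Qed.

End BoundedMultiplicities.

Lemma size_le_sumn (s : seq nat) : all (fun x => 0 < x)%N s -> (size s <= sumn s)%N.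
Proof. by elim: s => //= x s IHs /andP [x_pos /IHs]; rewrite -add1n; apply: leq_add. Qed.

Section PartitionsExponents.
Variables K N : nat.

Local Notation ptuple := {m : 'I_K.+1 & m.-tuple 'I_K.+1}.
Local Notation expvec := {ffun 'I_K.+1 -> 'I_N.+1}.

Definition parts (p : ptuple) : seq nat := map val (tagged p).

Definition ptuple_of (s : seq nat) : ptuple :=
  Tagged (fun m : 'I_K.+1 => m.-tuple 'I_K.+1)
    [tuple (inord (nth 0%N s i) : 'I_K.+1) | i < inord (size s)].

Lemma size_parts (p : ptuple) : size (parts p) = tag p.
Proof. by rewrite size_map size_tuple. Qed.

Lemma parts_lt (p : ptuple) : all (fun x => x < K.+1)%N (parts p).
Proof. by apply/allP => _ /mapP [i _ ->]; apply: ltn_ord. Qed.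

Lemma parts_inj : injective parts.
Proof.
move=> [m1 t1] [m2 t2]; rewrite /parts /= => t12; have m12 : m1 = m2.
  by apply: val_inj; rewrite /= -(size_tuple t1) -(size_tuple t2) -!(size_map val) t12.
by subst m2; congr Tagged; apply/val_inj/(inj_map val_inj).
Qed.

Lemma ptuple_ofK s : (size s <= K)%N -> all (fun x => x < K.+1)%N s ->
  parts (ptuple_of s) = s.
Proof.
move=> s_le s_lt; have m_eq : (inord (size s) : 'I_K.+1) = size s :> nat by rewrite inordK.
apply: (@eq_from_nth _ 0%N) => [|i]; rewrite size_map size_tuple m_eq // => i_lt.
rewrite (nth_map ord0) ?size_tuple ?m_eq //.
have i_lt' : (i < (inord (size s) : 'I_K.+1))%N by rewrite m_eq.
rewrite -(tnth_nth _ _ (Ordinal i_lt')) tnth_mktuple /=.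
by apply/inordK/(allP s_lt)/mem_nth.
Qed.

Lemma partsK (p : ptuple) : ptuple_of (parts p) = p.
Proof.
by apply: parts_inj; rewrite ptuple_ofK ?parts_lt // size_parts -ltnS.
Qed.

(* Coordinate [i > 0] is the multiplicity of the part [i]; coordinate [0], the
   exponent of [x 0], counts the [N - tag p] factors that contribute no part. *)
Definition expvec_of (p : ptuple) : expvec :=
  [ffun i => inord (if i == ord0 then N - tag p else count_mem (val i) (parts p))%N].

Definition expvec_parts (j : expvec) : seq nat :=
  sort leq (flatten [seq nseq (j i) (val i) | i <- enum 'I_K.+1 & i != ord0]).

Lemma expvec_ofE (p : ptuple) (i : 'I_K.+1) : (tag p <= N)%N ->
  expvec_of p i = (if i == ord0 then N - tag p else count_mem (val i) (parts p))%N :> nat.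
Proof.
move=> pN; rewrite ffunE inordK //; case: ifP => _; first by rewrite ltnS leq_subr.
by rewrite ltnS (leq_trans (count_size _ _)) // size_parts.
Qed.

Lemma mem_expvec_parts (j : expvec) x :
  x \in expvec_parts j -> exists2 i : 'I_K.+1, i != ord0 & x = i.
Proof.
rewrite mem_sort => /flattenP [_ /mapP [i + ->] /nseqP [-> _]].
by rewrite mem_filter => /andP [i0 _]; exists i.
Qed.

Lemma expvec_parts_lt (j : expvec) : all (fun x => x < K.+1)%N (expvec_parts j).
Proof. by apply/allP => x /mem_expvec_parts [i _ ->]. Qed.

Lemma expvec_parts_pos (j : expvec) : all (fun x => 0 < x)%N (expvec_parts j).
Proof.
apply/allP => x /mem_expvec_parts [i i0 ->]; rewrite lt0n.
by apply: contra i0 => /eqP i0; apply/eqP/val_inj.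
Qed.

Lemma sorted_expvec_parts (j : expvec) : sorted leq (expvec_parts j).
Proof. by apply: sort_sorted; apply: leq_total. Qed.

Lemma count_expvec_parts (j : expvec) (i : 'I_K.+1) :
  count_mem (val i) (expvec_parts j) = if i == ord0 then 0%N else j i.
Proof.
rewrite (seq.permP (permEl (perm_sort _ _))) count_flatten sumnE !big_map big_filter.
under eq_bigr do rewrite count_nseq.
rewrite big_enum_cond /=.
under eq_bigr do rewrite val_eqE.
have [-> | i0] := eqVneq i ord0; first by rewrite big1 // => k /negbTE ->.
rewrite (bigD1 i) //= eqxx mul1n big1 ?addn0 // => k /andP [_ /negbTE ->].
by rewrite mul0n.
Qed.

Lemma sum_expvec (j : expvec) : (\sum_i j i = j ord0 + size (expvec_parts j))%N.
Proof.
rewrite -sum1_size (sum_count_ord (expvec_parts_lt j)) !big_ord_recl /=.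
rewrite (count_expvec_parts j ord0) eqxx; congr (_ + _)%N; apply: eq_bigr => i _.
by rewrite (count_expvec_parts j (lift ord0 i)) eq_sym (negbTE (neq_lift _ _)) muln1.
Qed.

Lemma weighted_sum_expvec (j : expvec) :
  (\sum_(i < K.+1) i.+1 * j i = \sum_i j i + sumn (expvec_parts j))%N.
Proof.
rewrite (eq_bigr (fun i => j i + i * j i)%N) => [|i _]; last exact: mulSn.
rewrite big_split /=; congr (_ + _)%N.
rewrite sumnE (sum_count_ord (expvec_parts_lt j)); apply: eq_bigr => i _.
by rewrite (count_expvec_parts j i); case: eqP => [-> | _]; rewrite ?muln0 // mulnC.
Qed.

Definition obell_exponent (j : expvec) : bool :=
  ((\sum_i j i == N) && (\sum_(i < K.+1) i.+1 * j i == K + N))%N.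

Lemma obell_exponentE (j : expvec) : obell_exponent j =
  (j ord0 + size (expvec_parts j) == N)%N && (sumn (expvec_parts j) == K).
Proof.
rewrite /obell_exponent weighted_sum_expvec -sum_expvec.
by case: eqP => //= ->; rewrite [(K + N)%N]addnC eqn_add2l.
Qed.

Lemma size_expvec_parts_le (j : expvec) : obell_exponent j -> (size (expvec_parts j) <= K)%N.
Proof.
by rewrite obell_exponentE => /andP [_ /eqP <-]; apply/size_le_sumn/expvec_parts_pos.
Qed.

Lemma expvec_partsK (j : expvec) :
  obell_exponent j -> expvec_of (ptuple_of (expvec_parts j)) = j.
Proof.
move=> j_exp; have parts_j := ptuple_ofK (size_expvec_parts_le j_exp) (expvec_parts_lt j).
have tag_j : tag (ptuple_of (expvec_parts j)) = size (expvec_parts j) :> nat.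
  by rewrite -size_parts parts_j.
move: j_exp; rewrite obell_exponentE => /andP [/eqP j0 _].
have tag_le : (tag (ptuple_of (expvec_parts j)) <= N)%N by rewrite tag_j -j0 leq_addl.
apply/ffunP => i; apply: val_inj => /=; rewrite expvec_ofE // tag_j parts_j.
by rewrite (count_expvec_parts j i); case: eqP => [-> | //]; rewrite (canRL (addnK _) j0).
Qed.

Lemma expvec_ofK (p : ptuple) : is_partition K (parts p) -> (tag p <= N)%N ->
  expvec_parts (expvec_of p) = parts p.
Proof.
move=> /and3P [p_sorted p_pos _] pN.
apply: (sorted_eq leq_trans anti_leq (sorted_expvec_parts _) p_sorted).
apply/allP => x; rewrite mem_cat => /orP x_in; apply/eqP.
have x_lt : (x < K.+1)%N.
  by case: x_in => [/(allP (expvec_parts_lt _)) | /(allP (parts_lt p))].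
rewrite -[x]/(val (Ordinal x_lt)) count_expvec_parts expvec_ofE //.
case: eqP => [/(congr1 val) /= -> | //]; symmetry; apply/count_memPn.
by apply/negP => /(allP p_pos).
Qed.

Lemma obell_exponent_expvec_of (p : ptuple) : is_partition K (parts p) -> (tag p <= N)%N ->
  obell_exponent (expvec_of p).
Proof.
move=> p_part pN; rewrite obell_exponentE expvec_ofK // expvec_ofE // eqxx.
by rewrite size_parts subnK // eqxx /=; case/and3P: p_part.
Qed.

Lemma expvec_of_reindex (p : ptuple) :
  obell_exponent (expvec_of p) && (ptuple_of (expvec_parts (expvec_of p)) == p)
  = is_partition K (parts p) && (tag p <= N)%N.
Proof.
apply/andP/andP => [[j_exp /eqP pE] | [p_part pN]]; last first.
  by split; [apply: obell_exponent_expvec_of | rewrite expvec_ofK // partsK].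
have parts_p : parts p = expvec_parts (expvec_of p).
  by rewrite -{1}pE ptuple_ofK ?expvec_parts_lt ?size_expvec_parts_le.
move: j_exp; rewrite obell_exponentE -size_parts parts_p => /andP [/eqP sz /eqP sm].
rewrite /is_partition sm eqxx expvec_parts_pos sorted_expvec_parts.
by rewrite -sz leq_addl.
Qed.

Lemma prod_fact_expvec_of (p : ptuple) :
  all (fun x => 0 < x)%N (parts p) -> (tag p <= N)%N ->
  (\prod_(i < K.+1) (expvec_of p i)`! = (N - tag p)`! * Cstb (parts p))%N.
Proof.
move=> p_pos pN; rewrite (Cstb_count_ord (parts_lt p)) !big_ord_recl expvec_ofE //=.
have /count_memPn -> : 0%N \notin parts p by apply/negP => /(allP p_pos).
rewrite mul1n; congr (_ * _)%N; apply: eq_bigr => i _.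
by rewrite expvec_ofE // eq_sym (negbTE (neq_lift _ _)).
Qed.

Lemma prod_exp_expvec_of (R : comPzSemiRingType) (x : nat -> R) (p : ptuple) :
  x 0%N = 1 -> (tag p <= N)%N ->
  \prod_(i < K.+1) x i ^+ expvec_of p i = \prod_(y <- parts p) x y.
Proof.
move=> x0 pN; rewrite (prod_count_ord (parts_lt p)) !big_ord_recl /= x0 !expr1n.
congr (_ * _); apply: eq_bigr => i _.
by rewrite expvec_ofE // eq_sym (negbTE (neq_lift _ _)).
Qed.

Lemma obell_partitions (R : numFieldType) (x : nat -> R) : x 0%N = 1 ->
  obell (K + N) N x = \sum_(p : ptuple | is_partition K (parts p) && (tag p <= N)%N)
    (Cstb (parts p))%:R^-1 * ((N ^_ tag p)%:R * \prod_(y <- parts p) x y).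
Proof.
move=> x0; rewrite /obell addnK addn1.
rewrite (reindex_onto expvec_of (fun j => ptuple_of (expvec_parts j))) /=;
  last exact: expvec_partsK.
rewrite (eq_bigl _ _ expvec_of_reindex).
apply: eq_bigr => p /andP [/and3P [_ p_pos _] pN].
rewrite prod_fact_expvec_of // prod_exp_expvec_of // -(ffact_fact pN) !natrM.
have fact_neq0 : ((N - tag p)`!)%:R != 0 :> R by rewrite pnatr_eq0 -lt0n fact_gt0.
by rewrite invfM mulrA mulfK // -mulrA mulrCA.
Qed.

End PartitionsExponents.

Theorem mainTheorem3 (k N : nat) (a : nat -> Cplx) :
  let a0 : nat -> Cplx := fun j => if j == 0%N then 1 else a j in
  let anj : nat -> nat -> Cplx := fun n j => if (n <= N)%N then a j else 0 in
  obell (k + N) N a0 =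
  \sum_(m < k.+1) \sum_(t : m.-tuple 'I_k.+1 | is_partition k (map val t))
     ((Cstb (map val t))%:R)^-1 *
     \sum_(s : 'S_m) (-1) ^+ odd_perm s *
        AsigL s (fun i => val (tnth t i)) anj N.
Proof.
move=> a0 anj; rewrite obell_partitions //.
under [RHS]eq_bigr do under eq_bigr do rewrite sum_signed_AsigL_truncated.
rewrite (sig_big_dep _ (fun (m : 'I_k.+1) (t : m.-tuple 'I_k.+1) =>
  is_partition k (map val t))) /=.
rewrite [RHS](bigID (fun p => (@tag 'I_k.+1 _ p <= N)%N)) /= [X in _ + X]big1 ?addr0 => [|p].
  apply: eq_bigr => p /andP [/and3P [_ p_pos _] _]; congr (_ * (_ * _)).
  rewrite /parts big_map big_tuple; apply: eq_bigr => i _.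
  by have := allP p_pos _ (map_f val (mem_tnth i _)); rewrite /a0 lt0n => /negbTE ->.
by case/andP=> _; rewrite -ltnNge => /ffact_small ->; rewrite mul0r mulr0.
Qed.
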